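(* For every bounded distributive bilattice $\mathbb{B}$ (resp. bounded commutative distributive bilattice with conflation) we have $\mathbb{B}\cong(\mathbb{B}^+)_+$, and for every HBL (resp. HCBL) $\mathbb{H}$ we have $\mathbb{H}\cong(\mathbb{H}_+)^+$.
   Context: A bilattice is $(B,\le_t,\le_k,\neg)$ with $(B,\le_t)$ (operations $\wedge,\vee$) and $(B,\le_k)$ (operations $\otimes,\oplus$) lattices and $\neg$ satisfying: $a\le_tb\Rightarrow\neg b\le_t\neg a$, $a\le_kb\Rightarrow\neg a\le_k\neg b$, $\neg\neg a=a$. It is distributive if $x\circ(y\bullet z)=(x\circ y)\bullet(x\circ z)$ for all $\circ,\bullet\in\{\wedge,\vee,\otimes,\oplus\}$; bounds are $\mathtt{f},\mathtt{t}$ ($\le_t$) and $\bot,\top$ ($\le_k$). A bilattice with conflation additionally has $-$ with $a\le_tb\Rightarrow -a\le_t-b$, $a\le_kb\Rightarrow -b\le_k-a$, $--a=a$; commutative means $\neg-x=-\neg x$. Isomorphisms of bilattices (with conflation) are bijections preserving all these operations. A heterogeneous bilattice (HBL) is a tuple $(\mathbb{L}_1,\mathbb{L}_2,\mathrm{n},\mathrm{p})$ where $\mathbb{L}_i=(L_i,\sqcap_i,\sqcup_i,0_i,1_i)$ are bounded distributive lattices and $\mathrm{n}:\mathbb{L}_1\to\mathbb{L}_2$, $\mathrm{p}:\mathbb{L}_2\to\mathbb{L}_1$ are mutually inverse lattice isomorphisms. An HCBL is defined in the same way with $\mathbb{L}_i$ De Morgan algebras (negations ${\sim}_i$) and $\mathrm{n},\mathrm{p}$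 mutually inverse De Morgan algebra isomorphisms. An isomorphism $(\mathbb{L}_1,\mathbb{L}_2,\mathrm{n},\mathrm{p})\cong(\mathbb{L}_1',\mathbb{L}_2',\mathrm{n}',\mathrm{p}')$ is a pair of algebra isomorphisms $f_i:\mathbb{L}_i\to\mathbb{L}_i'$ with $f_2\circ\mathrm{n}=\mathrm{n}'\circ f_1$ and $f_1\circ\mathrm{p}=\mathrm{p}'\circ f_2$. For a bounded distributive bilattice $\mathbb{B}$, $\mathbb{B}^+$ is the HBL $(\mathbb{L}_1,\mathbb{L}_2,\mathrm{Id},\mathrm{Id})$ with $\mathbb{L}_1=\mathbb{L}_2=(\mathrm{Reg}(\mathbb{B}),\otimes,\oplus,\bot,\top)$, where $\mathrm{Reg}(\mathbb{B})=\{a\in B:a=\neg a\}$ (for a commutative bilattice with conflation, each $\mathbb{L}_i$ is also equipped with ${\sim}_i=-$ restricted to $\mathrm{Reg}(\mathbb{B})$). For an HBL $\mathbb{H}$, $\mathbb{H}_+$ is $L_1\times L_2$ with $\langle a_1,a_2\rangle\otimes\langle b_1,b_2\rangle=\langle a_1\sqcap_1b_1,a_2\sqcap_2b_2\rangle$, $\oplus$ componentwise $\sqcup$, $\langle a_1,a_2\rangle\wedge\langle b_1,b_2\rangle=\langle a_1\sqcap_1b_1,a_2\sqcup_2b_2\rangle$, $\langle a_1,a_2\rangle\vee\langle b_1,b_2\rangle=\langle a_1\sqcup_1b_1,a_2\sqcap_2b_2\rangle$, $\neg\langle a_1,a_2\rangle=\langle\mathrm{p}(a_2),\mathrm{n}(a_1)\rangle$,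 $\mathtt{f}=\langle0_1,1_2\rangle$, $\mathtt{t}=\langle1_1,0_2\rangle$, $\bot=\langle0_1,0_2\rangle$, $\top=\langle1_1,1_2\rangle$; for an HCBL also $-\langle a_1,a_2\rangle=\langle\mathrm{p}({\sim}_2a_2),\mathrm{n}({\sim}_1a_1)\rangle$. *)

Record is_lattice (L : Type) (m j : L -> L -> L) : Prop := {
  l_mC : forall a b, m a b = m b a;
  l_jC : forall a b, j a b = j b a;
  l_mA : forall a b c, m a (m b c) = m (m a b) c;
  l_jA : forall a b c, j a (j b c) = j (j a b) c;
  l_mj : forall a b, m a (j a b) = a;
  l_jm : forall a b, j a (m a b) = a }.

Record is_bdl (L : Type) (m j : L -> L -> L) (z o : L) : Prop := {
  bdl_lat : is_lattice L m j;
  bdl_distr : forall a b c, m a (j b c) = j (m a b) (m a c);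
  bdl_zero : forall a, m z a = z;
  bdl_one : forall a, j o a = o }.

Record is_demorgan (L : Type) (m j : L -> L -> L) (z o : L) (c : L -> L) : Prop := {
  dm_bdl : is_bdl L m j z o;
  dm_invol : forall a, c (c a) = a;
  dm_law : forall a b, c (m a b) = j (c a) (c b) }.

Record is_lat_hom (L M : Type) (mL jL : L -> L -> L) (zL oL : L)
       (mM jM : M -> M -> M) (zM oM : M) (f : L -> M) : Prop := {
  lh_meet : forall a b, f (mL a b) = mM (f a) (f b);
  lh_join : forall a b, f (jL a b) = jM (f a) (f b);
  lh_zero : f zL = zM;
  lh_one : f oL = oM }.

Record bisig := {
  carrier : Type;
  meet : carrier -> carrier -> carrier;
  join : carrier -> carrier -> carrier;
  tens : carrier -> carrier -> carrier;
  plus : carrier -> carrier -> carrier;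
  neg : carrier -> carrier;
  bff : carrier; btt : carrier; bbot : carrier; btop : carrier }.

Arguments meet {b}. Arguments join {b}. Arguments tens {b}. Arguments plus {b}.
Arguments neg {b}. Arguments bff {b}. Arguments btt {b}. Arguments bbot {b}.
Arguments btop {b}.

Definition le_t {B : bisig} (a b : carrier B) : Prop := meet a b = a.
Definition le_k {B : bisig} (a b : carrier B) : Prop := tens a b = a.

Inductive bop := OMeet | OJoin | OTens | OPlus.

Definition bapp (B : bisig) (o : bop) : carrier B -> carrier B -> carrier B :=
  match o with OMeet => meet | OJoin => join | OTens => tens | OPlus => plus end.

Record is_bdbilattice (B : bisig) : Prop := {
  bl_t : is_lattice (carrier B) meet join;
  bl_k : is_lattice (carrier B) tens plus;
  bl_ff : forall a : carrier B, meet bff a = bff;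
  bl_tt : forall a : carrier B, join btt a = btt;
  bl_bot : forall a : carrier B, tens bbot a = bbot;
  bl_top : forall a : carrier B, plus btop a = btop;
  bl_distr : forall (o1 o2 : bop) (x y z : carrier B),
      bapp B o1 x (bapp B o2 y z) = bapp B o2 (bapp B o1 x y) (bapp B o1 x z);
  bl_neg_t : forall a b : carrier B, le_t a b -> le_t (neg b) (neg a);
  bl_neg_k : forall a b : carrier B, le_k a b -> le_k (neg a) (neg b);
  bl_negK : forall a : carrier B, neg (neg a) = a }.

Record cbisig := { bs :> bisig; conf : carrier bs -> carrier bs }.

Record is_bcdbilattice_conf (B : cbisig) : Prop := {
  cb_bil : is_bdbilattice B;
  cb_conf_t : forall a b : carrier B, le_t a b -> le_t (conf B a) (conf B b);
  cb_conf_k : forall a b : carrier B, le_k a b -> le_k (conf B b) (conf B a);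
  cb_confK : forall a : carrier B, conf B (conf B a) = a;
  cb_comm : forall x : carrier B, neg (conf B x) = conf B (neg x) }.

Definition bil_iso (B C : bisig) : Prop :=
  exists (f : carrier B -> carrier C) (g : carrier C -> carrier B),
    (forall x, g (f x) = x) /\ (forall y, f (g y) = y) /\
    (forall o a b, f (bapp B o a b) = bapp C o (f a) (f b)) /\
    (forall a, f (neg a) = neg (f a)) /\
    f bff = bff /\ f btt = btt /\ f bbot = bbot /\ f btop = btop.

Definition cbil_iso (B C : cbisig) : Prop :=
  exists (f : carrier B -> carrier C) (g : carrier C -> carrier B),
    (forall x, g (f x) = x) /\ (forall y, f (g y) = y) /\
    (forall o a b, f (bapp B o a b) = bapp C o (f a) (f b)) /\
    (forall a, f (neg a) = neg (f a)) /\
    (forall a, f (conf B a) = conf C (f a)) /\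
    f bff = bff /\ f btt = btt /\ f bbot = bbot /\ f btop = btop.

Record hsig := {
  L1 : Type; L2 : Type;
  meet1 : L1 -> L1 -> L1; join1 : L1 -> L1 -> L1; zero1 : L1; one1 : L1;
  meet2 : L2 -> L2 -> L2; join2 : L2 -> L2 -> L2; zero2 : L2; one2 : L2;
  hn : L1 -> L2; hp : L2 -> L1 }.

Arguments meet1 {h}. Arguments join1 {h}. Arguments zero1 {h}. Arguments one1 {h}.
Arguments meet2 {h}. Arguments join2 {h}. Arguments zero2 {h}. Arguments one2 {h}.
Arguments hn {h}. Arguments hp {h}.

Record is_HBL (H : hsig) : Prop := {
  hbl_L1 : is_bdl (L1 H) meet1 join1 zero1 one1;
  hbl_L2 : is_bdl (L2 H) meet2 join2 zero2 one2;
  hbl_pn : forall a : L1 H, hp (hn a) = a;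
  hbl_np : forall b : L2 H, hn (hp b) = b;
  hbl_n_hom : is_lat_hom (L1 H) (L2 H) meet1 join1 zero1 one1 meet2 join2 zero2 one2 hn;
  hbl_p_hom : is_lat_hom (L2 H) (L1 H) meet2 join2 zero2 one2 meet1 join1 zero1 one1 hp }.

Record hcsig := { hsg :> hsig; dneg1 : L1 hsg -> L1 hsg; dneg2 : L2 hsg -> L2 hsg }.

Record is_HCBL (H : hcsig) : Prop := {
  hcbl_hbl : is_HBL H;
  hcbl_dm1 : is_demorgan (L1 H) meet1 join1 zero1 one1 (dneg1 H);
  hcbl_dm2 : is_demorgan (L2 H) meet2 join2 zero2 one2 (dneg2 H);
  hcbl_n_neg : forall a, hn (dneg1 H a) = dneg2 H (hn a);
  hcbl_p_neg : forall b, hp (dneg2 H b) = dneg1 H (hp b) }.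

Definition hbl_iso (H K : hsig) : Prop :=
  exists (f1 : L1 H -> L1 K) (g1 : L1 K -> L1 H) (f2 : L2 H -> L2 K) (g2 : L2 K -> L2 H),
    (forall x, g1 (f1 x) = x) /\ (forall y, f1 (g1 y) = y) /\
    (forall x, g2 (f2 x) = x) /\ (forall y, f2 (g2 y) = y) /\
    is_lat_hom (L1 H) (L1 K) meet1 join1 zero1 one1 meet1 join1 zero1 one1 f1 /\
    is_lat_hom (L2 H) (L2 K) meet2 join2 zero2 one2 meet2 join2 zero2 one2 f2 /\
    (forall a, f2 (hn a) = hn (f1 a)) /\ (forall b, f1 (hp b) = hp (f2 b)).

Definition hcbl_iso (H K : hcsig) : Prop :=
  exists (f1 : L1 H -> L1 K) (g1 : L1 K -> L1 H) (f2 : L2 H -> L2 K) (g2 : L2 K -> L2 H),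
    (forall x, g1 (f1 x) = x) /\ (forall y, f1 (g1 y) = y) /\
    (forall x, g2 (f2 x) = x) /\ (forall y, f2 (g2 y) = y) /\
    is_lat_hom (L1 H) (L1 K) meet1 join1 zero1 one1 meet1 join1 zero1 one1 f1 /\
    is_lat_hom (L2 H) (L2 K) meet2 join2 zero2 one2 meet2 join2 zero2 one2 f2 /\
    (forall a, f1 (dneg1 H a) = dneg1 K (f1 a)) /\
    (forall b, f2 (dneg2 H b) = dneg2 K (f2 b)) /\
    (forall a, f2 (hn a) = hn (f1 a)) /\ (forall b, f1 (hp b) = hp (f2 b)).

Definition plusH (H : hsig) : bisig := {|
  carrier := (L1 H * L2 H)%type;
  meet := fun x y => (meet1 (fst x) (fst y), join2 (snd x) (snd y));
  join := fun x y => (join1 (fst x) (fst y), meet2 (snd x) (snd y));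
  tens := fun x y => (meet1 (fst x) (fst y), meet2 (snd x) (snd y));
  plus := fun x y => (join1 (fst x) (fst y), join2 (snd x) (snd y));
  neg := fun x => (hp (snd x), hn (fst x));
  bff := (zero1, one2); btt := (one1, zero2);
  bbot := (zero1, zero2); btop := (one1, one2) |}.

Definition plusHC (H : hcsig) : cbisig := {|
  bs := plusH H;
  conf := fun x : L1 H * L2 H => (hp (dneg2 H (snd x)), hn (dneg1 H (fst x))) |}.

Record reg_closed (B : bisig) : Prop := {
  rc_tens : forall a b : carrier B, neg (tens a b) = tens (neg a) (neg b);
  rc_plus : forall a b : carrier B, neg (plus a b) = plus (neg a) (neg b);
  rc_bot : neg (@bbot B) = bbot;
  rc_top : neg (@btop B) = btop }.

Definition Reg (B : bisig) : Type := { a : carrier B | a = neg a }.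

Lemma reg_tens_pf (B : bisig) (R : reg_closed B) (a b : Reg B) :
  tens (proj1_sig a) (proj1_sig b) = neg (tens (proj1_sig a) (proj1_sig b)).
Proof. destruct a as [a ea], b as [b eb]; simpl. rewrite (rc_tens B R).
  rewrite <- ea, <- eb. reflexivity. Qed.
Lemma reg_plus_pf (B : bisig) (R : reg_closed B) (a b : Reg B) :
  plus (proj1_sig a) (proj1_sig b) = neg (plus (proj1_sig a) (proj1_sig b)).
Proof. destruct a as [a ea], b as [b eb]; simpl. rewrite (rc_plus B R).
  rewrite <- ea, <- eb. reflexivity. Qed.
Lemma reg_bot_pf (B : bisig) (R : reg_closed B) : (@bbot B) = neg bbot.
Proof. rewrite (rc_bot B R). reflexivity. Qed.
Lemma reg_top_pf (B : bisig) (R : reg_closed B) : (@btop B) = neg btop.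
Proof. rewrite (rc_top B R). reflexivity. Qed.

Definition reg_tens B R (a b : Reg B) : Reg B :=
  exist _ (tens (proj1_sig a) (proj1_sig b)) (reg_tens_pf B R a b).
Definition reg_plus B R (a b : Reg B) : Reg B :=
  exist _ (plus (proj1_sig a) (proj1_sig b)) (reg_plus_pf B R a b).
Definition reg_bot B R : Reg B := exist _ bbot (reg_bot_pf B R).
Definition reg_top B R : Reg B := exist _ btop (reg_top_pf B R).

Definition minusB (B : bisig) (R : reg_closed B) : hsig := {|
  L1 := Reg B; L2 := Reg B;
  meet1 := reg_tens B R; join1 := reg_plus B R; zero1 := reg_bot B R; one1 := reg_top B R;
  meet2 := reg_tens B R; join2 := reg_plus B R; zero2 := reg_bot B R; one2 := reg_top B R;
  hn := fun x => x; hp := fun x => x |}.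

Lemma reg_conf_pf (B : cbisig) (Hc : forall x : carrier B, neg (conf B x) = conf B (neg x))
  (a : Reg B) : conf B (proj1_sig a) = neg (conf B (proj1_sig a)).
Proof. destruct a as [a ea]; simpl. rewrite Hc, <- ea. reflexivity. Qed.

Definition reg_conf (B : cbisig) Hc (a : Reg B) : Reg B :=
  exist _ (conf B (proj1_sig a)) (reg_conf_pf B Hc a).

Definition minusBC (B : cbisig) (R : reg_closed B)
  (Hc : forall x : carrier B, neg (conf B x) = conf B (neg x)) : hcsig := {|
  hsg := minusB B R; dneg1 := reg_conf B Hc; dneg2 := reg_conf B Hc |}.

Section LatFacts.
Variables (L : Type) (m j : L -> L -> L) (HL : is_lattice L m j).

Lemma lat_dual : is_lattice L j m.
Proof. destruct HL; constructor; auto. Qed.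

Lemma lat_idem a : m a a = a.
Proof. transitivity (m a (j a (m a a))). rewrite (l_jm _ _ _ HL). reflexivity.
  apply (l_mj _ _ _ HL). Qed.

Lemma lat_lb1 a b : m (m a b) a = m a b.
Proof. rewrite (l_mC _ _ _ HL), (l_mA _ _ _ HL), lat_idem. reflexivity. Qed.

Lemma lat_lb2 a b : m (m a b) b = m a b.
Proof. rewrite <- (l_mA _ _ _ HL), lat_idem. reflexivity. Qed.

Lemma lat_glb a b c : m c a = c -> m c b = c -> m c (m a b) = c.
Proof. intros H1 H2. rewrite (l_mA _ _ _ HL), H1, H2. reflexivity. Qed.

Lemma lat_le_join a b : m a b = a -> j a b = b.
Proof. intros H. rewrite <- H, (l_mC _ _ _ HL), (l_jC _ _ _ HL), (l_jm _ _ _ HL).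
  reflexivity. Qed.

Lemma lat_join_le a b : j a b = b -> m a b = a.
Proof. intros H. rewrite <- H, (l_mj _ _ _ HL). reflexivity. Qed.

Lemma mono_pres_meet (f : L -> L) (invol : forall a, f (f a) = a)
  (mono : forall a b, m a b = a -> m (f a) (f b) = f a) a b :
  f (m a b) = m (f a) (f b).
Proof.
  assert (H1 : m (f (m a b)) (m (f a) (f b)) = f (m a b)).
  { apply lat_glb; apply mono; [apply lat_lb1 | apply lat_lb2]. }
  assert (Ha : m (f (m (f a) (f b))) (f (f a)) = f (m (f a) (f b)))
    by (apply mono; apply lat_lb1).
  assert (Hb : m (f (m (f a) (f b))) (f (f b)) = f (m (f a) (f b)))
    by (apply mono; apply lat_lb2).
  rewrite invol in Ha, Hb.
  pose proof (mono _ _ (lat_glb _ _ _ Ha Hb)) as H2. rewrite invol in H2.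
  rewrite <- H1, (l_mC _ _ _ HL), H2. reflexivity.
Qed.
End LatFacts.

Lemma bdbil_reg_closed (B : bisig) (HB : is_bdbilattice B) : reg_closed B.
Proof.
  pose proof (bl_k B HB) as Hk. pose proof (lat_dual _ _ _ Hk) as Hk'.
  pose proof (bl_negK B HB) as K. pose proof (bl_neg_k B HB) as M.
  unfold le_k in M.
  assert (Mp : forall a b : carrier B, plus a b = a -> plus (neg a) (neg b) = neg a).
  { intros a b H. rewrite (l_mC _ _ _ Hk') in H.
    pose proof (M _ _ (lat_join_le _ _ _ Hk _ _ H)) as H'.
    pose proof (lat_le_join _ _ _ Hk _ _ H') as H''.
    rewrite (l_mC _ _ _ Hk'). exact H''. }
  constructor.
  - intros a b. apply (mono_pres_meet _ _ _ Hk); auto.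
  - intros a b. apply (mono_pres_meet _ _ _ Hk'); auto.
  - pose proof (M _ _ (bl_bot B HB (neg bbot))) as H. rewrite K in H.
    rewrite (l_mC _ _ _ Hk), (bl_bot B HB) in H. symmetry; exact H.
  - pose proof (Mp _ _ (bl_top B HB (neg btop))) as H. rewrite K in H.
    rewrite (l_mC _ _ _ Hk'), (bl_top B HB) in H. symmetry; exact H.
Qed.

Lemma plusH_reg_closed (H : hsig) (HH : is_HBL H) : reg_closed (plusH H).
Proof.
  destruct HH as [_ _ _ _ [n1 n2 n3 n4] [p1 p2 p3 p4]].
  constructor; simpl.
  - intros [a1 a2] [b1 b2]; simpl. rewrite n1, p1. reflexivity.
  - intros [a1 a2] [b1 b2]; simpl. rewrite n2, p2. reflexivity.
  - rewrite n3, p3. reflexivity.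
  - rewrite n4, p4. reflexivity.
Qed.

Lemma plusHC_comm (H : hcsig) (HH : is_HCBL H) :
  forall x : carrier (plusHC H), neg (conf (plusHC H) x) = conf (plusHC H) (neg x).
Proof.
  destruct HH as [_ _ _ hn_neg hp_neg].
  intros [a1 a2]; simpl. f_equal; [rewrite hn_neg | rewrite hp_neg]; reflexivity.
Qed.

From Stdlib Require Import ProofIrrelevance.

(* Write x⁺ = x ⊔ ⊥ and x⁻ = x ⊓ ⊥. Every element satisfies x = x⁺ ⊕ x⁻, so it
   is determined by its two parts, and both parts commute with all four
   operations. Above ⊥ in the truth order ⊗ and ⊕ coincide with ⊓ and ⊔, below
   ⊥ with ⊔ and ⊓. Hence gluing the positive part of one regular element to the
   negative part of another, (r₁, r₂) ↦ r₁⁺ ⊕ r₂⁻, is an isomorphism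
   (B⁺)₊ → B, with inverse a ↦ (a⁺ ⊕ (¬a)⁻, (¬a)⁺ ⊕ a⁻). It respects a
   conflation because x⁺ ⊕ y⁻ = (x ⊓ ⊤) ⊗ (y ⊔ ⊤). Conversely, the regular
   elements of H₊ are the pairs (a, n a) = (p b, b), which identifies the two
   factors of (H₊)⁺ with L₁ and L₂. *)

Local Infix "⊓" := meet (at level 40, left associativity).
Local Infix "⊔" := join (at level 50, left associativity).
Local Infix "⊗" := tens (at level 40, left associativity).
Local Infix "⊕" := plus (at level 50, left associativity).
Local Notation "¬ x" := (neg x) (at level 35, right associativity).
Local Notation "⊥" := bbot.
Local Notation "⊤" := btop.

Section Lattice.
Variables (L : Type) (m j : L -> L -> L).
Hypothesis HL : is_lattice L m j.

Lemma lat_antisym a b : m a b = a -> m b a = b -> a = b.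
Proof. intros Hab Hba. rewrite <- Hab, (l_mC _ _ _ HL). exact Hba. Qed.

Lemma lat_lub a b c : m a c = a -> m b c = b -> m (j a b) c = j a b.
Proof.
  intros Ha Hb. apply (lat_join_le _ _ _ HL).
  apply (lat_le_join _ _ _ HL) in Ha. apply (lat_le_join _ _ _ HL) in Hb.
  rewrite <- (l_jA _ _ _ HL), Hb, Ha. reflexivity.
Qed.

Section Involution.
Variable f : L -> L.
Hypothesis fK : forall a, f (f a) = a.

Lemma antitone_involution_meet (f_anti : forall a b, m a b = a -> m (f b) (f a) = f b) a b :
  f (m a b) = j (f a) (f b).
Proof.
  assert (Ha : m (f (j (f a) (f b))) a = f (j (f a) (f b))).
  { pose proof (f_anti _ _ (l_mj _ _ _ HL (f a) (f b))) as H. rewrite fK in H. exact H. }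
  assert (Hb : m (f (j (f a) (f b))) b = f (j (f a) (f b))).
  { rewrite (l_jC _ _ _ HL).
    pose proof (f_anti _ _ (l_mj _ _ _ HL (f b) (f a))) as H. rewrite fK in H. exact H. }
  apply lat_antisym.
  - pose proof (f_anti _ _ (lat_glb _ _ _ HL _ _ _ Ha Hb)) as H. rewrite fK in H. exact H.
  - apply lat_lub; apply f_anti; [apply (lat_lb1 _ _ _ HL) | apply (lat_lb2 _ _ _ HL)].
Qed.

Lemma antitone_involution_join (f_anti : forall a b, m a b = a -> m (f b) (f a) = f b) a b :
  f (j a b) = m (f a) (f b).
Proof.
  rewrite <- (fK (m (f a) (f b))), (antitone_involution_meet f_anti), !fK. reflexivity.
Qed.

Lemma monotone_involution_join (f_mono : forall a b, m a b = a -> m (f a) (f b) = f a) a b :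
  f (j a b) = j (f a) (f b).
Proof.
  apply (mono_pres_meet _ _ _ (lat_dual _ _ _ HL) f fK).
  intros x y Hxy. rewrite (l_jC _ _ _ HL) in Hxy |- *.
  apply (lat_le_join _ _ _ HL), f_mono, (lat_join_le _ _ _ HL), Hxy.
Qed.

End Involution.
End Lattice.

Lemma bil_iso_sym (B C : bisig) : bil_iso B C -> bil_iso C B.
Proof.
  intros (f & g & gf & fg & f_op & f_neg & f_ff & f_tt & f_bot & f_top).
  exists g, f. repeat apply conj; try assumption.
  - intros o a b. rewrite <- (gf (bapp B o (g a) (g b))), f_op, !fg. reflexivity.
  - intros a. rewrite <- (gf (¬ g a)), f_neg, fg. reflexivity.
  - rewrite <- (gf bff), f_ff. reflexivity.
  - rewrite <- (gf btt), f_tt. reflexivity.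
  - rewrite <- (gf ⊥), f_bot. reflexivity.
  - rewrite <- (gf ⊤), f_top. reflexivity.
Qed.

Lemma cbil_iso_sym (B C : cbisig) : cbil_iso B C -> cbil_iso C B.
Proof.
  intros (f & g & gf & fg & f_op & f_neg & f_conf & f_ff & f_tt & f_bot & f_top).
  exists g, f. repeat apply conj; try assumption.
  - intros o a b. rewrite <- (gf (bapp B o (g a) (g b))), f_op, !fg. reflexivity.
  - intros a. rewrite <- (gf (¬ g a)), f_neg, fg. reflexivity.
  - intros a. rewrite <- (gf (conf B (g a))), f_conf, fg. reflexivity.
  - rewrite <- (gf bff), f_ff. reflexivity.
  - rewrite <- (gf btt), f_tt. reflexivity.
  - rewrite <- (gf ⊥), f_bot. reflexivity.
  - rewrite <- (gf ⊤), f_top. reflexivity.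
Qed.

Lemma Reg_val_inj (B : bisig) (x y : Reg B) : proj1_sig x = proj1_sig y -> x = y.
Proof. destruct x as [x ex], y as [y ey]. apply subset_eq_compat. Qed.

(* [plusH] computes [o] as [kop_pos o] on first and [kop_neg o] on second
   components. *)
Definition kop_pos (o : bop) : bop :=
  match o with OMeet | OTens => OTens | OJoin | OPlus => OPlus end.
Definition kop_neg (o : bop) : bop :=
  match o with OJoin | OTens => OTens | OMeet | OPlus => OPlus end.

Section Bilattice.
Variable B : bisig.
Hypothesis HB : is_bdbilattice B.
Local Notation T := (carrier B).
Local Notation Ht := (bl_t B HB).
Local Notation Hk := (bl_k B HB).

Lemma bappC o (a b : T) : bapp B o a b = bapp B o b a.
Proof.
  destruct o; [exact (l_mC _ _ _ Ht a b) | exact (l_jC _ _ _ Ht a b)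
              | exact (l_mC _ _ _ Hk a b) | exact (l_jC _ _ _ Hk a b)].
Qed.

Lemma bappI o (a : T) : bapp B o a a = a.
Proof.
  destruct o; [exact (lat_idem _ _ _ Ht a) | exact (lat_idem _ _ _ (lat_dual _ _ _ Ht) a)
              | exact (lat_idem _ _ _ Hk a) | exact (lat_idem _ _ _ (lat_dual _ _ _ Hk) a)].
Qed.

Lemma bapp_distr_r o1 o2 (x y z : T) :
  bapp B o1 (bapp B o2 y z) x = bapp B o2 (bapp B o1 y x) (bapp B o1 z x).
Proof. rewrite bappC, (bl_distr B HB), !(bappC o1 x). reflexivity. Qed.

Lemma meetC (a b : T) : a ⊓ b = b ⊓ a. Proof. exact (bappC OMeet a b). Qed.
Lemma joinC (a b : T) : a ⊔ b = b ⊔ a. Proof. exact (bappC OJoin a b). Qed.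
Lemma tensC (a b : T) : a ⊗ b = b ⊗ a. Proof. exact (bappC OTens a b). Qed.
Lemma plusC (a b : T) : a ⊕ b = b ⊕ a. Proof. exact (bappC OPlus a b). Qed.

Lemma plus_meet_distr (x y z : T) : x ⊕ (y ⊓ z) = (x ⊕ y) ⊓ (x ⊕ z).
Proof. exact (bl_distr B HB OPlus OMeet x y z). Qed.
Lemma plus_join_distr (x y z : T) : x ⊕ (y ⊔ z) = (x ⊕ y) ⊔ (x ⊕ z).
Proof. exact (bl_distr B HB OPlus OJoin x y z). Qed.
Lemma tens_meet_distr (x y z : T) : x ⊗ (y ⊓ z) = (x ⊗ y) ⊓ (x ⊗ z).
Proof. exact (bl_distr B HB OTens OMeet x y z). Qed.
Lemma tens_join_distr (x y z : T) : x ⊗ (y ⊔ z) = (x ⊗ y) ⊔ (x ⊗ z).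
Proof. exact (bl_distr B HB OTens OJoin x y z). Qed.

Lemma plus_bot (a : T) : ⊥ ⊕ a = a.
Proof. exact (lat_le_join _ _ _ Hk _ _ (bl_bot B HB a)). Qed.
Lemma plus_bot_r (a : T) : a ⊕ ⊥ = a.
Proof. rewrite plusC. apply plus_bot. Qed.
Lemma tens_bot_r (a : T) : a ⊗ ⊥ = ⊥.
Proof. rewrite tensC. apply (bl_bot B HB). Qed.
Lemma tens_top_r (a : T) : a ⊗ ⊤ = a.
Proof. apply (lat_join_le _ _ _ Hk). rewrite plusC. apply (bl_top B HB). Qed.
Lemma plus_top_r (a : T) : a ⊕ ⊤ = ⊤.
Proof. rewrite plusC. apply (bl_top B HB). Qed.
Lemma join_tt_r (a : T) : a ⊔ btt = btt.
Proof. rewrite joinC. apply (bl_tt B HB). Qed.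
Lemma meet_tt_r (a : T) : a ⊓ btt = a.
Proof. apply (lat_join_le _ _ _ Ht). apply join_tt_r. Qed.
Lemma meet_ff_r (a : T) : a ⊓ bff = bff.
Proof. rewrite meetC. apply (bl_ff B HB). Qed.
Lemma join_ff_r (a : T) : a ⊔ bff = a.
Proof. rewrite joinC. exact (lat_le_join _ _ _ Ht _ _ (bl_ff B HB a)). Qed.

Lemma le_k_antisym (a b : T) : le_k a b -> le_k b a -> a = b.
Proof. exact (lat_antisym _ _ _ Hk a b). Qed.

Lemma tens_le_k o (x y : T) : le_k (x ⊗ y) (bapp B o x y).
Proof.
  unfold le_k. change (bapp B OTens (x ⊗ y) (bapp B o x y) = x ⊗ y).
  rewrite (bl_distr B HB); simpl.
  rewrite (lat_lb1 _ _ _ Hk), (lat_lb2 _ _ _ Hk). apply bappI.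
Qed.

Lemma bapp_le_k_plus o (x y : T) : le_k (bapp B o x y) (x ⊕ y).
Proof.
  apply (lat_join_le _ _ _ Hk).
  change (bapp B OPlus (bapp B o x y) (x ⊕ y) = x ⊕ y).
  rewrite bapp_distr_r; simpl. rewrite !(plusC _ (x ⊕ y)).
  rewrite (lat_lb1 _ _ _ (lat_dual _ _ _ Hk)), (lat_lb2 _ _ _ (lat_dual _ _ _ Hk)).
  apply bappI.
Qed.

Lemma bot_join_top : ⊥ ⊔ ⊤ = @btt B.
Proof.
  apply le_k_antisym.
  - apply (lat_join_le _ _ _ Hk).
    rewrite plusC, plus_join_distr, plus_bot_r, plus_top_r. apply (bl_tt B HB).
  - unfold le_k. rewrite tens_join_distr, tens_bot_r, tens_top_r. apply join_tt_r.
Qed.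

Lemma bot_meet_top : ⊥ ⊓ ⊤ = @bff B.
Proof.
  apply le_k_antisym.
  - apply (lat_join_le _ _ _ Hk).
    rewrite plusC, plus_meet_distr, plus_bot_r, plus_top_r. apply (bl_ff B HB).
  - unfold le_k. rewrite tens_meet_distr, tens_bot_r, tens_top_r. apply meet_ff_r.
Qed.

Lemma negK (a : T) : ¬ ¬ a = a.
Proof. exact (bl_negK B HB a). Qed.
Lemma neg_meet (a b : T) : ¬ (a ⊓ b) = ¬ a ⊔ ¬ b.
Proof. exact (antitone_involution_meet _ _ _ Ht _ negK (bl_neg_t B HB) a b). Qed.
Lemma neg_join (a b : T) : ¬ (a ⊔ b) = ¬ a ⊓ ¬ b.
Proof. exact (antitone_involution_join _ _ _ Ht _ negK (bl_neg_t B HB) a b). Qed.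
Lemma neg_tens (a b : T) : ¬ (a ⊗ b) = ¬ a ⊗ ¬ b.
Proof. exact (rc_tens B (bdbil_reg_closed B HB) a b). Qed.
Lemma neg_plus (a b : T) : ¬ (a ⊕ b) = ¬ a ⊕ ¬ b.
Proof. exact (rc_plus B (bdbil_reg_closed B HB) a b). Qed.
Lemma neg_bot : ¬ ⊥ = @bbot B.
Proof. exact (rc_bot B (bdbil_reg_closed B HB)). Qed.

Lemma neg_above_bot (u : T) : le_t u ⊥ -> le_t ⊥ (¬ u).
Proof. intros Hu. rewrite <- neg_bot. exact (bl_neg_t B HB _ _ Hu). Qed.

Lemma plus_le_t_pos (x y : T) : le_t ⊥ y -> le_t x (x ⊕ y).
Proof.
  intros Hy. pose proof (plus_meet_distr x ⊥ y) as E.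
  rewrite Hy, plus_bot_r in E. symmetry. exact E.
Qed.

Lemma tens_tt_pos (u : T) : le_t ⊥ u -> u ⊗ btt = u.
Proof.
  intros Hu. rewrite <- bot_join_top, tens_join_distr, tens_bot_r, tens_top_r.
  exact (lat_le_join _ _ _ Ht _ _ Hu).
Qed.

Lemma tens_ff_neg (u : T) : le_t u ⊥ -> u ⊗ bff = u.
Proof.
  intros Hu. rewrite <- bot_meet_top, tens_meet_distr, tens_bot_r, tens_top_r, meetC.
  exact Hu.
Qed.

Lemma tens_le_t_pos (u y : T) : le_t ⊥ u -> le_t (u ⊗ y) u.
Proof.
  intros Hu. pose proof (tens_meet_distr u y btt) as E.
  rewrite meet_tt_r, (tens_tt_pos u Hu) in E. symmetry. exact E.
Qed.

Lemma meet_le_k_l (u v : T) : le_t ⊥ v -> le_k (u ⊓ v) u.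
Proof.
  intros Hv. apply (lat_join_le _ _ _ Hk).
  rewrite plusC, plus_meet_distr, (lat_idem _ _ _ (lat_dual _ _ _ Hk)).
  exact (plus_le_t_pos u v Hv).
Qed.

Lemma le_k_join_l (u v : T) : le_t ⊥ u -> le_k u (u ⊔ v).
Proof.
  intros Hu. unfold le_k. rewrite tens_join_distr, (lat_idem _ _ _ Hk), joinC.
  exact (lat_le_join _ _ _ Ht _ _ (tens_le_t_pos u v Hu)).
Qed.

Lemma tens_eq_meet_pos (u v : T) : le_t ⊥ u -> le_t ⊥ v -> u ⊗ v = u ⊓ v.
Proof.
  intros Hu Hv. apply le_k_antisym.
  - exact (tens_le_k OMeet u v).
  - apply (lat_glb _ _ _ Hk).
    + exact (meet_le_k_l u v Hv).
    + rewrite meetC. exact (meet_le_k_l v u Hu).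
Qed.

Lemma plus_eq_join_pos (u v : T) : le_t ⊥ u -> le_t ⊥ v -> u ⊕ v = u ⊔ v.
Proof.
  intros Hu Hv. apply le_k_antisym.
  - apply (lat_lub _ _ _ Hk).
    + exact (le_k_join_l u v Hu).
    + rewrite joinC. exact (le_k_join_l v u Hv).
  - exact (bapp_le_k_plus OJoin u v).
Qed.

Lemma tens_eq_join_neg (u v : T) : le_t u ⊥ -> le_t v ⊥ -> u ⊗ v = u ⊔ v.
Proof.
  intros Hu Hv.
  rewrite <- (negK (u ⊗ v)), neg_tens,
    (tens_eq_meet_pos _ _ (neg_above_bot u Hu) (neg_above_bot v Hv)).
  rewrite neg_meet, !negK. reflexivity.
Qed.

Lemma plus_eq_meet_neg (u v : T) : le_t u ⊥ -> le_t v ⊥ -> u ⊕ v = u ⊓ v.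
Proof.
  intros Hu Hv.
  rewrite <- (negK (u ⊕ v)), neg_plus,
    (plus_eq_join_pos _ _ (neg_above_bot u Hu) (neg_above_bot v Hv)).
  rewrite neg_join, !negK. reflexivity.
Qed.

Lemma bapp_kop_pos o (u v : T) :
  le_t ⊥ u -> le_t ⊥ v -> bapp B (kop_pos o) u v = bapp B o u v.
Proof. intros Hu Hv. destruct o; simpl; auto using tens_eq_meet_pos, plus_eq_join_pos. Qed.

Lemma bapp_kop_neg o (u v : T) :
  le_t u ⊥ -> le_t v ⊥ -> bapp B (kop_neg o) u v = bapp B o u v.
Proof. intros Hu Hv. destruct o; simpl; auto using tens_eq_join_neg, plus_eq_meet_neg. Qed.

(* In the product representation B ≅ L ⊙ L: pos_part (x₁, x₂) = (x₁, 0),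
   neg_part (x₁, x₂) = (0, x₂) and glue x y = (x₁, y₂). *)
Definition pos_part (x : T) : T := x ⊔ ⊥.
Definition neg_part (x : T) : T := x ⊓ ⊥.
Definition glue (x y : T) : T := pos_part x ⊕ neg_part y.

Lemma pos_part_positive x : le_t ⊥ (pos_part x).
Proof. unfold le_t, pos_part. rewrite joinC. apply (l_mj _ _ _ Ht). Qed.
Lemma neg_part_negative x : le_t (neg_part x) ⊥.
Proof. apply (lat_lb2 _ _ _ Ht). Qed.

Lemma pos_part_idem x : pos_part (pos_part x) = pos_part x.
Proof. exact (lat_lb2 _ _ _ (lat_dual _ _ _ Ht) x ⊥). Qed.
Lemma neg_part_idem x : neg_part (neg_part x) = neg_part x.
Proof. exact (lat_lb2 _ _ _ Ht x ⊥). Qed.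
Lemma pos_part_of_negative u : le_t u ⊥ -> pos_part u = ⊥.
Proof. exact (lat_le_join _ _ _ Ht u ⊥). Qed.
Lemma neg_part_of_positive u : le_t ⊥ u -> neg_part u = ⊥.
Proof. intros Hu. unfold neg_part. rewrite meetC. exact Hu. Qed.

Lemma pos_part_bapp o x y : pos_part (bapp B o x y) = bapp B o (pos_part x) (pos_part y).
Proof. exact (bapp_distr_r OJoin o ⊥ x y). Qed.
Lemma neg_part_bapp o x y : neg_part (bapp B o x y) = bapp B o (neg_part x) (neg_part y).
Proof. exact (bapp_distr_r OMeet o ⊥ x y). Qed.

Lemma pos_part_bot : pos_part ⊥ = ⊥.
Proof. exact (lat_idem _ _ _ (lat_dual _ _ _ Ht) ⊥). Qed.
Lemma neg_part_bot : neg_part ⊥ = ⊥.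
Proof. exact (lat_idem _ _ _ Ht ⊥). Qed.
Lemma pos_part_top : pos_part ⊤ = btt.
Proof. unfold pos_part. rewrite joinC. exact bot_join_top. Qed.
Lemma neg_part_top : neg_part ⊤ = bff.
Proof. unfold neg_part. rewrite meetC. exact bot_meet_top. Qed.

Lemma pos_part_glue x y : pos_part (glue x y) = pos_part x.
Proof.
  unfold glue. change (pos_part (bapp B OPlus (pos_part x) (neg_part y)) = pos_part x).
  rewrite pos_part_bapp; simpl.
  rewrite pos_part_idem, (pos_part_of_negative _ (neg_part_negative y)).
  apply plus_bot_r.
Qed.

Lemma neg_part_glue x y : neg_part (glue x y) = neg_part y.
Proof.
  unfold glue. change (neg_part (bapp B OPlus (pos_part x) (neg_part y)) = neg_part y).
  rewrite neg_part_bapp; simpl.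
  rewrite (neg_part_of_positive _ (pos_part_positive x)), neg_part_idem.
  apply plus_bot.
Qed.

Lemma glue_diag x : glue x x = x.
Proof.
  unfold glue, pos_part, neg_part.
  rewrite plusC, plus_join_distr, plus_bot_r, (plusC _ x), plus_meet_distr, plus_bot_r.
  rewrite (lat_idem _ _ _ (lat_dual _ _ _ Hk)), (lat_idem _ _ _ Ht).
  apply (l_jm _ _ _ Ht).
Qed.

Lemma eq_parts x y : pos_part x = pos_part y -> neg_part x = neg_part y -> x = y.
Proof.
  intros Hpos Hneg. rewrite <- (glue_diag x), <- (glue_diag y).
  unfold glue. rewrite Hpos, Hneg. reflexivity.
Qed.

Lemma glue_glue a b c d : glue (glue a b) (glue c d) = glue a d.
Proof. unfold glue at 1. rewrite pos_part_glue, neg_part_glue. reflexivity. Qed.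

Lemma neg_glue x y : ¬ glue x y = glue (¬ y) (¬ x).
Proof.
  unfold glue, pos_part, neg_part.
  rewrite neg_plus, neg_join, neg_meet, neg_bot, plusC. reflexivity.
Qed.

Lemma glue_tens_form x y : glue x y = (x ⊓ ⊤) ⊗ (y ⊔ ⊤).
Proof.
  change (glue x y = bapp B OTens (bapp B OMeet x ⊤) (bapp B OJoin y ⊤)).
  apply eq_parts.
  - rewrite pos_part_glue, !pos_part_bapp; simpl.
    rewrite pos_part_top, meet_tt_r, join_tt_r.
    symmetry. exact (tens_tt_pos _ (pos_part_positive x)).
  - rewrite neg_part_glue, !neg_part_bapp; simpl.
    rewrite neg_part_top, meet_ff_r, join_ff_r, tensC.
    symmetry. exact (tens_ff_neg _ (neg_part_negative y)).
Qed.

Lemma glue_neg_regular a b : b = ¬ a -> glue a b = ¬ glue a b.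
Proof. intros ->. rewrite neg_glue, negK. reflexivity. Qed.

Variable R : reg_closed B.
Local Notation BR := (carrier (plusH (minusB B R))).

Definition of_pair (y : BR) : T := glue (proj1_sig (fst y)) (proj1_sig (snd y)).

Definition to_pair (a : T) : BR :=
  (exist _ (glue a (¬ a)) (glue_neg_regular a (¬ a) eq_refl),
   exist _ (glue (¬ a) a) (glue_neg_regular (¬ a) a (eq_sym (negK a)))).

Lemma to_pairK a : of_pair (to_pair a) = a.
Proof. unfold of_pair, to_pair; simpl. rewrite glue_glue. apply glue_diag. Qed.

Lemma of_pair_neg y : of_pair (¬ y) = ¬ of_pair y.
Proof.
  destruct y as [[y1 e1] [y2 e2]]. unfold of_pair; simpl.
  rewrite neg_glue, <- e1, <- e2. reflexivity.
Qed.

Lemma of_pairK y : to_pair (of_pair y) = y.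
Proof.
  destruct y as [y1 y2]. unfold to_pair.
  f_equal; apply Reg_val_inj; simpl; rewrite <- of_pair_neg;
    unfold of_pair; simpl; rewrite glue_glue; apply glue_diag.
Qed.

Lemma val_fst_bapp o (x y : BR) :
  proj1_sig (fst (bapp _ o x y)) = bapp B (kop_pos o) (proj1_sig (fst x)) (proj1_sig (fst y)).
Proof. destruct o; reflexivity. Qed.

Lemma val_snd_bapp o (x y : BR) :
  proj1_sig (snd (bapp _ o x y)) = bapp B (kop_neg o) (proj1_sig (snd x)) (proj1_sig (snd y)).
Proof. destruct o; reflexivity. Qed.

Lemma of_pair_bapp o (x y : BR) : of_pair (bapp _ o x y) = bapp B o (of_pair x) (of_pair y).
Proof.
  unfold of_pair. apply eq_parts.
  - rewrite pos_part_bapp, !pos_part_glue, val_fst_bapp, pos_part_bapp.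
    apply bapp_kop_pos; apply pos_part_positive.
  - rewrite neg_part_bapp, !neg_part_glue, val_snd_bapp, neg_part_bapp.
    apply bapp_kop_neg; apply neg_part_negative.
Qed.

Lemma of_pair_ff : of_pair bff = bff.
Proof. unfold of_pair, glue; simpl. rewrite pos_part_bot, neg_part_top. apply plus_bot. Qed.
Lemma of_pair_tt : of_pair btt = btt.
Proof. unfold of_pair, glue; simpl. rewrite pos_part_top, neg_part_bot. apply plus_bot_r. Qed.
Lemma of_pair_bot : of_pair ⊥ = ⊥.
Proof. apply glue_diag. Qed.
Lemma of_pair_top : of_pair ⊤ = ⊤.
Proof. apply glue_diag. Qed.

Lemma of_pair_iso : bil_iso (plusH (minusB B R)) B.
Proof.
  exists of_pair, to_pair.
  repeat apply conj; auto using of_pairK, to_pairK, of_pair_bapp, of_pair_neg,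
    of_pair_ff, of_pair_tt, of_pair_bot, of_pair_top.
Qed.

End Bilattice.

Arguments glue {B}.
Arguments of_pair {B R}.

Section Conflation.
Variable B : cbisig.
Hypothesis HB : is_bcdbilattice_conf B.
Local Notation HB0 := (cb_bil B HB).

Lemma conf_meet (a b : carrier B) : conf B (a ⊓ b) = conf B a ⊓ conf B b.
Proof. exact (mono_pres_meet _ _ _ (bl_t B HB0) _ (cb_confK B HB) (cb_conf_t B HB) a b). Qed.
Lemma conf_join (a b : carrier B) : conf B (a ⊔ b) = conf B a ⊔ conf B b.
Proof.
  exact (monotone_involution_join _ _ _ (bl_t B HB0) _ (cb_confK B HB) (cb_conf_t B HB) a b).
Qed.
Lemma conf_plus (a b : carrier B) : conf B (a ⊕ b) = conf B a ⊗ conf B b.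
Proof.
  exact (antitone_involution_join _ _ _ (bl_k B HB0) _ (cb_confK B HB) (cb_conf_k B HB) a b).
Qed.

Lemma conf_bot : conf B ⊥ = ⊤.
Proof.
  pose proof (cb_conf_k B HB ⊥ (conf B ⊤) (bl_bot B HB0 _)) as H.
  unfold le_k in H. rewrite (cb_confK B HB), (tensC _ HB0), (tens_top_r _ HB0) in H. exact H.
Qed.

Lemma conf_glue (a b : carrier B) : conf B (glue a b) = glue (conf B b) (conf B a).
Proof.
  rewrite (glue_tens_form _ HB0 (conf B b)), (tensC _ HB0).
  unfold glue, pos_part, neg_part. rewrite conf_plus, conf_join, conf_meet, conf_bot.
  reflexivity.
Qed.

Variables (R : reg_closed B) (Hc : forall x : carrier B, ¬ conf B x = conf B (¬ x)).

Lemma of_pair_conf (y : carrier (plusHC (minusBC B R Hc))) :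
  of_pair (conf _ y) = conf B (of_pair y).
Proof. destruct y as [y1 y2]. unfold of_pair; simpl. symmetry. apply conf_glue. Qed.

Lemma of_pair_ciso : cbil_iso (plusHC (minusBC B R Hc)) B.
Proof.
  exists of_pair, (to_pair _ HB0 R).
  exact (conj (of_pairK _ HB0 R) (conj (to_pairK _ HB0 R) (conj (of_pair_bapp _ HB0 R)
    (conj (of_pair_neg _ HB0 R) (conj of_pair_conf (conj (of_pair_ff _ HB0 R)
    (conj (of_pair_tt _ HB0 R) (conj (of_pair_bot _ HB0 R) (of_pair_top _ HB0 R))))))))).
Qed.

End Conflation.

Section Heterogeneous.
Variables (H : hsig) (HH : is_HBL H).

Lemma pair_n_regular (a : L1 H) : (a, hn a) = @neg (plusH H) (a, hn a).
Proof. simpl. rewrite (hbl_pn H HH). reflexivity. Qed.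
Lemma pair_p_regular (b : L2 H) : (hp b, b) = @neg (plusH H) (hp b, b).
Proof. simpl. rewrite (hbl_np H HH). reflexivity. Qed.

Definition reg_of1 (a : L1 H) : Reg (plusH H) := exist _ (a, hn a) (pair_n_regular a).
Definition reg_of2 (b : L2 H) : Reg (plusH H) := exist _ (hp b, b) (pair_p_regular b).

Lemma reg_of1K (y : Reg (plusH H)) : reg_of1 (fst (proj1_sig y)) = y.
Proof.
  destruct y as [[y1 y2] e]. apply Reg_val_inj; simpl.
  injection e as _ e2. rewrite e2. reflexivity.
Qed.
Lemma reg_of2K (y : Reg (plusH H)) : reg_of2 (snd (proj1_sig y)) = y.
Proof.
  destruct y as [[y1 y2] e]. apply Reg_val_inj; simpl.
  injection e as e1 _. rewrite e1. reflexivity.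
Qed.

Lemma reg_of2_hn a : reg_of2 (hn a) = reg_of1 a.
Proof. apply Reg_val_inj; simpl. rewrite (hbl_pn H HH). reflexivity. Qed.
Lemma reg_of1_hp b : reg_of1 (hp b) = reg_of2 b.
Proof. apply Reg_val_inj; simpl. rewrite (hbl_np H HH). reflexivity. Qed.

Variable R : reg_closed (plusH H).
Local Notation K := (minusB (plusH H) R).

Lemma reg_of1_lat_hom :
  is_lat_hom (L1 H) (L1 K) meet1 join1 zero1 one1 meet1 join1 zero1 one1 reg_of1.
Proof.
  destruct (hbl_n_hom H HH) as [n_meet n_join n_zero n_one].
  constructor; intros; apply Reg_val_inj; simpl;
    rewrite ?n_meet, ?n_join, ?n_zero, ?n_one; reflexivity.
Qed.
Lemma reg_of2_lat_hom :
  is_lat_hom (L2 H) (L2 K) meet2 join2 zero2 one2 meet2 join2 zero2 one2 reg_of2.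
Proof.
  destruct (hbl_p_hom H HH) as [p_meet p_join p_zero p_one].
  constructor; intros; apply Reg_val_inj; simpl;
    rewrite ?p_meet, ?p_join, ?p_zero, ?p_one; reflexivity.
Qed.

Lemma reg_iso : hbl_iso H K.
Proof.
  exists reg_of1, (fun y => fst (proj1_sig y)), reg_of2, (fun y => snd (proj1_sig y)).
  exact (conj (fun _ => eq_refl) (conj reg_of1K (conj (fun _ => eq_refl) (conj reg_of2K
    (conj reg_of1_lat_hom (conj reg_of2_lat_hom (conj reg_of2_hn reg_of1_hp))))))).
Qed.

End Heterogeneous.

Section HeterogeneousConflation.
Variables (H : hcsig) (HH : is_HCBL H).
Local Notation HH0 := (hcbl_hbl H HH).
Variables (R : reg_closed (plusHC H))
  (Hc : forall x : carrier (plusHC H), ¬ conf _ x = conf _ (¬ x)).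

Lemma reg_of1_dneg a : reg_of1 H HH0 (dneg1 H a) = reg_conf (plusHC H) Hc (reg_of1 H HH0 a).
Proof. apply Reg_val_inj; simpl. rewrite (hcbl_p_neg H HH), (hbl_pn H HH0). reflexivity. Qed.
Lemma reg_of2_dneg b : reg_of2 H HH0 (dneg2 H b) = reg_conf (plusHC H) Hc (reg_of2 H HH0 b).
Proof. apply Reg_val_inj; simpl. rewrite (hcbl_n_neg H HH), (hbl_np H HH0). reflexivity. Qed.

Lemma reg_ciso : hcbl_iso H (minusBC (plusHC H) R Hc).
Proof.
  exists (reg_of1 H HH0), (fun y => fst (proj1_sig y)),
    (reg_of2 H HH0), (fun y => snd (proj1_sig y)).
  exact (conj (fun _ => eq_refl) (conj (reg_of1K H HH0)
    (conj (fun _ => eq_refl) (conj (reg_of2K H HH0)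
    (conj (reg_of1_lat_hom H HH0 R) (conj (reg_of2_lat_hom H HH0 R)
    (conj reg_of1_dneg (conj reg_of2_dneg (conj (reg_of2_hn H HH0) (reg_of1_hp H HH0)))))))))).
Qed.

End HeterogeneousConflation.

Theorem mainTheorem9 :
  (forall (B : bisig) (HB : is_bdbilattice B),
      bil_iso B (plusH (minusB B (bdbil_reg_closed B HB))))
  /\
  (forall (B : cbisig) (HB : is_bcdbilattice_conf B),
      cbil_iso B
        (plusHC (minusBC B (bdbil_reg_closed B (cb_bil B HB)) (cb_comm B HB))))
  /\
  (forall (H : hsig) (HH : is_HBL H),
      hbl_iso H (minusB (plusH H) (plusH_reg_closed H HH)))
  /\
  (forall (H : hcsig) (HH : is_HCBL H),
      hcbl_iso H
        (minusBC (plusHC H) (plusH_reg_closed H (hcbl_hbl H HH)) (plusHC_comm H HH))).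
Proof.
  repeat apply conj.
  - intros B HB. exact (bil_iso_sym _ _ (of_pair_iso B HB _)).
  - intros B HB. exact (cbil_iso_sym _ _ (of_pair_ciso B HB _ _)).
  - intros H HH. exact (reg_iso H HH _).
  - intros H HH. exact (reg_ciso H HH _ _).
Qed.
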